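(* Let $N\ge2$. The period $T^{G_3,M}_N$ of the M-type 3-state Grover walk on $C_N$ equals $6$ if $N=3$ and $\infty$ otherwise. The period $T^{G_3,F}_N$ of the F-type 3-state Grover walk on $C_N$ equals $4$ if $N=3$ and $\infty$ otherwise.
   Context: For $N\ge2$, vertices of the cycle $C_N$ are $\mathbb{Z}/N\mathbb{Z}$. The state space of a 3-state walk is $\mathbb{C}^N\otimes\mathbb{C}^3$ with orthonormal basis $|x\rangle\otimes|\leftarrow\rangle,\ |x\rangle\otimes|\cdot\rangle,\ |x\rangle\otimes|\rightarrow\rangle$ ($x\in\mathbb{Z}/N\mathbb{Z}$). The shift $S$ acts by $S(|x\rangle\otimes|\leftarrow\rangle)=|x-1\rangle\otimes|\leftarrow\rangle$, $S(|x\rangle\otimes|\rightarrow\rangle)=|x+1\rangle\otimes|\rightarrow\rangle$, $S(|x\rangle\otimes|\cdot\rangle)=|x\rangle\otimes|\cdot\rangle$ (mod $N$). For a unitary $3\times3$ local coin $A$ (in the ordered basis $(|\leftarrow\rangle,|\cdot\rangle,|\rightarrow\rangle)$) the time-evolution operator is $U=S(I_N\otimes A)$. The M-type Grover walk uses $A^{G_3,M}=\frac13\begin{bmatrix}-1&2&2\\2&-1&2\\2&2&-1\end{bmatrix}$ and the F-type Grover walk uses $A^{G_3,F}=\frac13\begin{bmatrix}2&2&-1\\2&-1&2\\-1&2&2\end{bmatrix}$; the resulting operators are $U^{G_3,M}_N$ and $U^{G_3,F}_N$. The period of a walk with time-evolution operator $U$ is $\inf\{n\ge1:U^n=I\}$,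 or $\infty$ if no such $n$ exists. *)

From HB Require Import structures.
From mathcomp Require Import all_boot all_order all_algebra all_field.
Set Implicit Arguments. Unset Strict Implicit. Unset Printing Implicit Defensive.
Import Order.TTheory GRing.Theory Num.Theory.
Local Open Scope ring_scope.

(* State space C^N (x) C^3 is represented as N x 3 matrices psi, with
   psi x c the coefficient of |x> (x) |c>, where the coin basis is ordered
   0 = |<-| , 1 = |.| , 2 = |->| ; vertices 'I_N = Z/NZ (ordS = +1, ord_pred = -1). *)
Definition state (N : nat) := 'M[algC]_(N, 3).

(* The local coin (I_N (x) A): psi'(x,c) = sum_d A c d psi(x,d). *)
Definition coin_op (N : nat) (A : 'M[algC]_3) (psi : state N) : state N :=
  psi *m A^T.

(* The shift S: |x>|<-> |-> |x-1>|<->, |x>|.> |-> |x>|.>, |x>|-> |-> |x+1>|->. *)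
Definition shift_op (N : nat) (psi : state N) : state N :=
  \matrix_(x < N, c < 3)
    if (val c == 0)%N then psi (ordS x) c
    else if (val c == 2)%N then psi (ord_pred x) c
    else psi x c.

Definition walk_op (N : nat) (A : 'M[algC]_3) (psi : state N) : state N :=
  shift_op (coin_op A psi).

Definition coinGM : 'M[algC]_3 :=
  3%:R^-1 *: \matrix_(i < 3, j < 3) (if i == j then -1 else 2%:R).

Definition coinGF : 'M[algC]_3 :=
  3%:R^-1 *: \matrix_(i < 3, j < 3) (if (val i + val j == 2)%N then -1 else 2%:R).

Definition UGM (N : nat) := @walk_op N coinGM.
Definition UGF (N : nat) := @walk_op N coinGF.

Definition is_identity_power (N : nat) (U : state N -> state N) (n : nat) : Prop :=
  forall psi : state N, iter n U psi = psi.

(* period U = p, where p = Some n means the finite value n and None means infinity: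
   period = inf {n >= 1 : U^n = I} (inf of the empty set = infinity). *)
Definition period_is (N : nat) (U : state N -> state N) (p : option nat) : Prop :=
  match p with
  | Some n => (0 < n)%N /\ is_identity_power U n /\
              (forall m, (0 < m < n)%N -> ~ is_identity_power U m)
  | None => forall m, (0 < m)%N -> ~ is_identity_power U m
  end.

Arguments UGM N : clear implicits.
Arguments UGF N : clear implicits.

From mathcomp Require Import all_boot all_order all_algebra all_field.
From mathcomp Require Import ring zify.
Set Implicit Arguments. Unset Strict Implicit. Unset Printing Implicit Defensive.
Import Order.TTheory GRing.Theory Num.Theory.
Local Open Scope ring_scope.

(* On the plane waves x |-> w^x v with w^N = 1
   the walk acts by a 3x3 matrix whose trace is -(1 + w + w^-1)/3 (M-type) or
   2(1 + w + w^-1)/3 - 1 (F-type).  If U^m = I this matrix has finite order, so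
   its trace is a sum of roots of unity, hence an algebraic integer.  But for w
   a primitive d-th root of unity, where d | N is 9 or is > 1 and prime to 3,
   the number (1 + w + w^2)/3 is not integral: if 3 does not divide d then
   1 + w + w^2 is a unit, and for d = 9, 3 is (w - 1)^6 times a unit.  For
   N = 3 the periods 6 and 4 are found by direct computation. *)

Lemma Aint_mxtrace_unity n (M : 'M[algC]_n.+1) m :
  (0 < m)%N -> M ^+ m = 1 -> \tr M \in Aint.
Proof.
move=> m_gt0 Mm1.
have [r defM] := closed_field_poly_normal (char_poly M).
rewrite (monicP (char_poly_monic M)) scale1r in defM.
have size_r : size r = n.+1.
  by have := size_char_poly M; rewrite defM size_prod_XsubC => -[].
have -> : \tr M = \sum_(z <- r) z.
  apply: oppr_inj; rewrite -char_poly_trace // defM -coefPn_prod_XsubC ?size_r //.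
rewrite big_seq; apply: rpred_sum => z zr.
have /eigenvalueP[v vM v_nz] : eigenvalue M z.
  by rewrite eigenvalue_root_char defM root_prod_XsubC.
apply: (@Aint_unity_root m) => //; rewrite unity_rootE.
have : v *m M ^+ m = z ^+ m *: v.
  elim: (m) => [|k IHk]; first by rewrite expr0 mulmx1 scale1r.
  by rewrite exprSr -mulmxE mulmxA IHk -scalemxAl vM scalerA -exprSr.
rewrite Mm1 mulmx1 => /eqP; rewrite -subr_eq0 -{1}(scale1r v) -scalerBl.
by rewrite scaler_eq0 (negbTE v_nz) orbF subr_eq0 eq_sym.
Qed.

Lemma natr_inv_notAint k : (1 < k)%N -> (k%:R : algC)^-1 \notin Aint.
Proof.
move=> k_gt1; apply/negP => kVA.
have k_nz : (k%:R : algC) != 0 by rewrite pnatr_eq0 -lt0n ltnW.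
have : (k%:R : algC)^-1 \in Num.int.
  by apply: Cint_rat_Aint => //; rewrite rpredV rpred_nat.
rewrite intrEge0 ?invr_ge0 ?ler0n //; case/natrP => i def_i.
have /eqP : (k * i)%:R = (1 : algC) by rewrite natrM -def_i mulfV.
rewrite -[1 : algC]/(1%:R) eqr_nat muln_eq1 => /andP[/eqP k1 _].
by rewrite k1 in k_gt1.
Qed.

Lemma prim_root_coprime3_notAint d (w : algC) :
  (1 < d)%N -> ~~ (3 %| d)%N -> d.-primitive_root w ->
  (1 + w + w ^+ 2) / 3%:R \notin Aint.
Proof.
move=> d_gt1 d_n3 pw.
have [k [j def_3k]] : exists k j, (3 * k = j * d + 1)%N.
  have := divn_eq d 3; have := ltn_pmod d (isT : (0 < 3)%N).
  move: d_n3; rewrite /dvdn; case: (d %% 3)%N => [|[|[|r]]] //= _ _ def_d.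
  - by exists (2 * (d %/ 3) + 1)%N, 2%N; lia.
  - by exists (d %/ 3 + 1)%N, 1%N; lia.
have w_3k : w ^+ (3 * k) = w.
  by rewrite def_3k exprD (mulnC j) exprM (prim_expr_order pw) expr1n mul1r.
have w_neq1 : w - 1 != 0.
  rewrite subr_eq0 -[w]expr1 -(prim_order_dvd pw) dvdn1.
  by apply: contraTneq d_gt1 => ->.
(* the inverse of 1 + w + w^2 is the geometric sum of (w^3)^i, i < k *)
set S := \sum_(i < k) (w ^+ 3) ^+ i.
have S_Aint : S \in Aint.
  by apply: rpred_sum => i _; apply/rpredX/rpredX/(Aint_prim_root pw).
have S_inv : (1 + w + w ^+ 2) * S = 1.
  apply: (mulfI w_neq1); rewrite mulr1.
  have : (w ^+ 3) ^+ k - 1 = (w ^+ 3 - 1) * S by rewrite subrX1.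
  by rewrite -exprM w_3k => def_w1; rewrite [RHS]def_w1; ring.
apply/negP => zA.
have : (1 + w + w ^+ 2) / 3%:R * S \in Aint by apply: rpredM.
by rewrite mulrAC S_inv mul1r; apply/negP; apply: natr_inv_notAint.
Qed.

Lemma prim_root9_notAint (w : algC) :
  9.-primitive_root w -> (1 + w + w ^+ 2) / 3%:R \notin Aint.
Proof.
move=> pw.
have wA := Aint_prim_root pw.
have w3_neq1 : w ^+ 3 - 1 != 0 by rewrite subr_eq0 -(prim_order_dvd pw).
have cyclo9_w : w ^+ 6 + w ^+ 3 + 1 = 0.
  apply: (mulfI w3_neq1); rewrite mulr0.
  have -> : (w ^+ 3 - 1) * (w ^+ 6 + w ^+ 3 + 1) = w ^+ 9 - 1 by ring.
  by rewrite (prim_expr_order pw) subrr.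
(* the cofactor v of the factorization 3 = (w - 1)^6 v in Z[w] *)
set v := 10%:R + 11%:R * w + 7%:R * w ^+ 2 + 10%:R * w ^+ 3
         + 4%:R * w ^+ 4 - 4%:R * w ^+ 5.
have vA : v \in Aint by rewrite /v ?(rpredB, rpredD, rpredM, rpredX, rpred_nat).
have def3 : (w - 1) ^+ 6 * v = 3%:R.
  apply/eqP; rewrite -subr_eq0; apply/eqP.
  have -> : (w - 1) ^+ 6 * v - 3%:R = (w ^+ 6 + w ^+ 3 + 1) *
     (7%:R - 49%:R * w + 91%:R * w ^+ 2 - 74%:R * w ^+ 3 + 28%:R * w ^+ 4
      - 4%:R * w ^+ 5) by rewrite /v; ring.
  by rewrite cyclo9_w mul0r.
apply/negP => zA.
have qA : (w - 1) ^+ 2 / 3%:R \in Aint.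
  have -> : (w - 1) ^+ 2 / 3%:R = (1 + w + w ^+ 2) / 3%:R - w by field.
  exact: rpredB.
have : ((w - 1) ^+ 2 / 3%:R) ^+ 3 * v \in Aint by rewrite rpredM ?rpredX.
have -> : ((w - 1) ^+ 2 / 3%:R) ^+ 3 * v = (w - 1) ^+ 6 * v / 27%:R by field.
have -> : (w - 1) ^+ 6 * v / 27%:R = (9%:R)^-1 by rewrite def3; field.
by apply/negP; apply: natr_inv_notAint.
Qed.

Lemma exists_divisor_9_or_coprime3 N : (2 <= N)%N -> N != 3%N ->
  exists2 d, (d %| N)%N & (d == 9%N) || (1 < d)%N && ~~ (3 %| d)%N.
Proof.
move=> N_ge2 N_neq3.
have [dvd9N | ndvd9N] := boolP (9 %| N)%N; first by exists 9%N.
have [dvd3N | ndvd3N] := boolP (3 %| N)%N.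
  exists (N %/ 3)%N; first exact: dvdn_div.
  apply/orP; right; apply/andP; split.
    by case/dvdnP: dvd3N N_neq3 N_ge2 => q ->; rewrite mulnK //; lia.
  apply: contra ndvd9N => dvd3; rewrite -(divnK dvd3N).
  by rewrite -[9%N]/(3 * 3)%N mulnC dvdn_pmul2l.
by exists N; rewrite // N_ge2 ndvd3N orbT.
Qed.

Lemma exists_unity_root_notAint N : (2 <= N)%N -> N != 3%N ->
  exists w : algC, w ^+ N = 1 /\ (1 + w + w ^+ N.-1) / 3%:R \notin Aint.
Proof.
move=> N_ge2 N_neq3.
have [d dvd_dN good_d] := exists_divisor_9_or_coprime3 N_ge2 N_neq3.
have [|w pw] := @C_prim_root_exists d.
  by case/orP: good_d => [/eqP -> | /andP[/ltnW]].
have wN : w ^+ N = 1 by apply/eqP; rewrite -(prim_order_dvd pw).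
exists w; split => //; apply: contraL good_d => zA.
have : (1 + w + w ^+ 2) / 3%:R \in Aint.
  have -> : (1 + w + w ^+ 2) / 3%:R = w * ((1 + w + w ^+ N.-1) / 3%:R).
    have w_wN1 : w * w ^+ N.-1 = 1 by rewrite -exprS prednK // ltnW.
    by rewrite mulrA !mulrDr w_wN1; field.
  by rewrite rpredM // (Aint_prim_root pw).
apply: contraL; case/orP => [/eqP d9 | /andP[d_gt1 d_n3]].
  by rewrite d9 in pw; apply: prim_root9_notAint.
exact: prim_root_coprime3_notAint pw.
Qed.

Section IdentityPowers.

Variables (N : nat) (U : state N -> state N).

Lemma identity_powerM k n : is_identity_power U n -> is_identity_power U (k * n).
Proof.
move=> Un psi; elim: k => [|k IHk] //.
by rewrite mulSn iterD IHk Un.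
Qed.

Lemma identity_power_mod m n :
  is_identity_power U m -> is_identity_power U n -> is_identity_power U (m %% n).
Proof.
move=> Um Un psi; have := Um psi.
by rewrite {1}(divn_eq m n) addnC iterD identity_powerM.
Qed.

(* a least exponent m of an identity power below p leaves p %% m < m, so m | p *)
Lemma period_is_Some p :
  (0 < p)%N -> is_identity_power U p ->
  (forall d, (d %| p)%N -> (d < p)%N -> ~ is_identity_power U d) ->
  period_is U (Some p).
Proof.
move=> p_gt0 Up no_divisor; split=> //; split=> // m.
elim/ltn_ind: m => m IHm /andP[m_gt0 m_lt_p] Um.
have Upm := identity_power_mod Up Um.
have [pm0 | pm_gt0] := posnP (p %% m).
  by apply: (no_divisor m) => //; rewrite /dvdn pm0.
have pm_lt_m : (p %% m < m)%N by rewrite ltn_mod.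
apply: (IHm _ pm_lt_m) Upm.
by rewrite pm_gt0 (ltn_trans pm_lt_m).
Qed.

End IdentityPowers.

Definition plane_wave N (w : algC) (v : 'rV[algC]_3) : state N :=
  \matrix_(x < N, c < 3) (w ^+ x * v 0 c).

Definition phase_row N (w : algC) : 'rV[algC]_3 :=
  \row_(c < 3)
    (if val c == 0%N then w else if val c == 2%N then w ^+ N.-1 else 1).

Definition fourier_mx N (w : algC) (A : 'M[algC]_3) : 'M[algC]_3 :=
  A^T *m diag_mx (phase_row N w).

Section PlaneWaves.

Variables (N : nat) (w : algC) (A : 'M[algC]_3).
Hypotheses (N_gt0 : (0 < N)%N) (wN : w ^+ N = 1).

Lemma walk_op_plane_wave v :
  walk_op A (plane_wave N w v) = plane_wave N w (v *m fourier_mx N w A).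
Proof.
have coinE (y : 'I_N) (c : 'I_3) : \sum_(j < 3) plane_wave N w v y j * A^T j c
    = w ^+ y * \sum_(j < 3) v 0 j * A^T j c.
  by rewrite mulr_sumr; apply: eq_bigr => d _; rewrite !mxE; ring.
apply/matrixP => x c; rewrite /fourier_mx mulmxA mul_mx_diag !mxE /=.
case: c => [[|[|[|c]]] lt_c3] //=; rewrite coinE /= ?expr_mod //.
- by rewrite exprS; ring.
- by ring.
- have -> : ((x + N).-1 = x + N.-1)%N by rewrite -!subn1 addnBA.
  by rewrite exprD; ring.
Qed.

Lemma iter_walk_op_plane_wave m v :
  iter m (walk_op A) (plane_wave N w v)
  = plane_wave N w (v *m fourier_mx N w A ^+ m).
Proof.
elim: m => [|m IHm]; first by rewrite expr0 mulmx1.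
by rewrite iterS IHm walk_op_plane_wave exprSr -mulmxE mulmxA.
Qed.

Lemma fourier_mx_unity m :
  is_identity_power (@walk_op N A) m -> fourier_mx N w A ^+ m = 1.
Proof.
move=> Um; apply/row_matrixP => i; rewrite !rowE mulmx1.
have := Um (plane_wave N w (delta_mx 0 i)).
rewrite iter_walk_op_plane_wave => /matrixP/(_ (Ordinal N_gt0))/(_ _) E.
by apply/rowP => c; have := E c; rewrite !mxE /= expr0 !mul1r.
Qed.

Lemma walk_op_aperiodic :
  \tr (fourier_mx N w A) \notin Aint -> period_is (@walk_op N A) None.
Proof.
move=> trA m m_gt0 Um; move/negP: trA; apply.
exact: Aint_mxtrace_unity m_gt0 (fourier_mx_unity Um).
Qed.

End PlaneWaves.

Lemma mxtrace_fourier_GM N w :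
  \tr (fourier_mx N w coinGM) = - ((1 + w + w ^+ N.-1) / 3%:R).
Proof.
rewrite /fourier_mx mul_mx_diag /mxtrace !big_ord_recr big_ord0 /= !mxE /=.
by field.
Qed.

Lemma mxtrace_fourier_GF N w :
  \tr (fourier_mx N w coinGF) = 2%:R * ((1 + w + w ^+ N.-1) / 3%:R) - 1.
Proof.
rewrite /fourier_mx mul_mx_diag /mxtrace !big_ord_recr big_ord0 /= !mxE /=.
by field.
Qed.

Lemma UGM_aperiodic N : (2 <= N)%N -> N != 3%N -> period_is (UGM N) None.
Proof.
move=> N_ge2 N_neq3; have [w [wN zA]] := exists_unity_root_notAint N_ge2 N_neq3.
apply: (@walk_op_aperiodic N w) => //; first exact: ltnW.
by rewrite mxtrace_fourier_GM rpredN.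
Qed.

Lemma UGF_aperiodic N : (2 <= N)%N -> N != 3%N -> period_is (UGF N) None.
Proof.
move=> N_ge2 N_neq3; have [w [wN zA]] := exists_unity_root_notAint N_ge2 N_neq3.
apply: (@walk_op_aperiodic N w) => //; first exact: ltnW.
apply: contra zA; rewrite mxtrace_fourier_GF => trA.
have wA : w \in Aint.
  by apply: (@Aint_unity_root N); rewrite ?unity_rootE ?wN // ltnW.
have -> : (1 + w + w ^+ N.-1) / 3%:R
    = 2%:R * (2%:R * ((1 + w + w ^+ N.-1) / 3%:R) - 1 + 1) - (1 + w + w ^+ N.-1).
  by field.
apply: rpredB; last by rewrite !rpredD ?rpredX ?rpred1.
by rewrite rpredM ?rpred_nat // rpredD ?rpred1.
Qed.

Definition succ3 (x : nat) : nat := match x with 0 => 1 | 1 => 2 | _ => 0 end%N.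
Definition pred3 (x : nat) : nat := match x with 0 => 2 | 1 => 0 | _ => 1 end%N.

(* The walk on C_3 acting on coefficient functions, only meaningful on
   [0, 3) x [0, 3); unlike matrices, these reduce by computation. *)
Definition walk3 (a g : nat -> nat -> algC) : nat -> nat -> algC :=
  fun x c => let y := (match c with 0 => succ3 x | 2 => pred3 x | _ => x end)%N in
    a c 0%N * g y 0%N + a c 1%N * g y 1%N + a c 2%N * g y 2%N.

Definition coefGM (c d : nat) : algC := 3%:R^-1 * (if c == d then -1 else 2%:R).
Definition coefGF (c d : nat) : algC :=
  3%:R^-1 * (if (c + d == 2)%N then -1 else 2%:R).

Definition fun_of_state (psi : state 3) : nat -> nat -> algC :=
  fun i j => psi (inord i) (inord j).

Lemma coinGME (c d : 'I_3) : coinGM c d = coefGM c d.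
Proof. by rewrite /coinGM !mxE. Qed.

Lemma coinGFE (c d : 'I_3) : coinGF c d = coefGF c d.
Proof. by rewrite /coinGF !mxE. Qed.

Lemma walk3_ext a (g h : nat -> nat -> algC) x c :
  (forall i j, (i < 3)%N -> (j < 3)%N -> g i j = h i j) ->
  (x < 3)%N -> walk3 a g x c = walk3 a h x c.
Proof.
move=> eq_gh lt_x3; rewrite /walk3.
have : ((match c with 0 => succ3 x | 2 => pred3 x | _ => x end) < 3)%N.
  by case: c => [|[|[|c]]] //; case: x lt_x3 => [|[|[|x]]].
by move=> lt_y3; rewrite !eq_gh.
Qed.

Lemma iter_walk3_ext a n (g h : nat -> nat -> algC) x c :
  (forall i j, (i < 3)%N -> (j < 3)%N -> g i j = h i j) ->
  (x < 3)%N -> (c < 3)%N -> iter n (walk3 a) g x c = iter n (walk3 a) h x c.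
Proof.
move=> eq_gh; elim: n x c => [|n IHn] x c lt_x3 lt_c3 /=; first exact: eq_gh.
by apply: walk3_ext => // i j lt_i3 lt_j3; apply: IHn.
Qed.

Definition delta00 (i j : nat) : algC :=
  if (i == 0%N) && (j == 0%N) then 1 else 0.

Section WalkOnC3.

Variables (A : 'M[algC]_3) (a : nat -> nat -> algC).
Hypothesis coinE : forall c d : 'I_3, A c d = a c d.

Lemma walk_op3E psi (x c : 'I_3) :
  walk_op A psi x c = walk3 a (fun_of_state psi) x c.
Proof.
have stateE (i j : 'I_3) : psi i j = fun_of_state psi i j.
  by rewrite /fun_of_state !inord_val.
rewrite /walk_op /shift_op /coin_op !mxE.
case: x => [[|[|[|x]]] lt_x3] //; case: c => [[|[|[|c]]] lt_c3] //;
  rewrite /= ?mxE ?big_ord_recr ?big_ord0 /= ?mxE ?coinE !stateE /walk3 /=; ring.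
Qed.

Lemma iter_walk_op3E n psi (x c : 'I_3) :
  iter n (walk_op A) psi x c = iter n (walk3 a) (fun_of_state psi) x c.
Proof.
elim: n x c => [|n IHn] x c; first by rewrite /= /fun_of_state !inord_val.
rewrite iterS walk_op3E iterS; apply: walk3_ext => // i j lt_i3 lt_j3.
by rewrite /fun_of_state IHn /= !inordK.
Qed.

Lemma identity_power3 n :
  (forall g x c, (x < 3)%N -> (c < 3)%N -> iter n (walk3 a) g x c = g x c) ->
  is_identity_power (@walk_op 3 A) n.
Proof.
move=> walk3n psi; apply/matrixP => x c.
by rewrite iter_walk_op3E walk3n // /fun_of_state !inord_val.
Qed.

Lemma not_identity_power3 n k : k != 9%N ->
  iter n (walk3 a) delta00 0%N 0%N = k%:R / 9%:R ->
  ~ is_identity_power (@walk_op 3 A) n.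
Proof.
move=> k_neq9 walk3n Un.
have := Un (\matrix_(x < 3, c < 3) delta00 x c) => /matrixP/(_ ord0 ord0).
rewrite iter_walk_op3E (@iter_walk3_ext _ _ _ delta00) //; last first.
  by move=> i j lt_i3 lt_j3; rewrite /fun_of_state mxE !inordK.
rewrite walk3n mxE /delta00 /= => /(congr1 ( *%R^~ 9%:R)).
rewrite mulfVK ?pnatr_eq0 // mul1r => /eqP.
by rewrite eqr_nat (negbTE k_neq9).
Qed.

End WalkOnC3.

Ltac walk3_compute :=
  cbv beta iota zeta delta [iter walk3 succ3 pred3 coefGM coefGF delta00];
  rewrite /=; field.

Lemma UGM3_period : period_is (UGM 3) (Some 6%N).
Proof.
have UGM3_2 : ~ is_identity_power (UGM 3) 2.
  by apply: (not_identity_power3 coinGME (k := 4%N)) => //; walk3_compute.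
have UGM3_3 : ~ is_identity_power (UGM 3) 3.
  by apply: (not_identity_power3 coinGME (k := 5%N)) => //; walk3_compute.
apply: period_is_Some => //.
  apply: (identity_power3 coinGME) => g x c lt_x3 lt_c3.
  case: x lt_x3 => [|[|[|x]]] // _; case: c lt_c3 => [|[|[|c]]] // _;
  by walk3_compute.
case=> [|[|[|[|[|[|d]]]]]] // _ _ U1.
by apply: UGM3_2; apply: (identity_powerM 2 U1).
Qed.

Lemma UGF3_period : period_is (UGF 3) (Some 4%N).
Proof.
have UGF3_2 : ~ is_identity_power (UGF 3) 2.
  by apply: (not_identity_power3 coinGFE (k := 1%N)) => //; walk3_compute.
apply: period_is_Some => //.
  apply: (identity_power3 coinGFE) => g x c lt_x3 lt_c3.
  case: x lt_x3 => [|[|[|x]]] // _; case: c lt_c3 => [|[|[|c]]] // _;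
  by walk3_compute.
case=> [|[|[|[|d]]]] // _ _ U1.
by apply: UGF3_2; apply: (identity_powerM 2 U1).
Qed.

Local Close Scope ring_scope.

Theorem theorem6p2 (N : nat) (hN : (2 <= N)%N) :
  period_is (UGM N) (if N == 3 then Some 6 else None) /\
  period_is (UGF N) (if N == 3 then Some 4 else None).
Proof.
case: eqVneq => [-> | N_neq3].
  by split; [exact: UGM3_period | exact: UGF3_period].
by split; [exact: UGM_aperiodic | exact: UGF_aperiodic].
Qed.
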